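(* For every first-order formula $\phi(x_1,\dots,x_k)$ in the language $\{+,\times\}$ of arithmetic there is a first-order formula $\psi_\phi(x_1,\dots,x_k)$ in the language $\{\le,[1]+[1]\}$ such that for all $n_1,\dots,n_k\in\mathbb N$, $$\langle\mathbb N,+,\times\rangle\models\phi(n_1,\dots,n_k)\iff \mathbf Y^*\models\psi_\phi([n_1],\dots,[n_k]).$$
   Context: $\mathbb N$ is the set of non-negative integers with the usual addition and multiplication. $\mathcal P$ is the set of all integer partitions, including the empty partition $\emptyset$; a partition is a nonincreasing finite sequence of positive integers. $[n]$ denotes the partition with a single part $n$, with the convention $[0]=\emptyset$. Young's lattice $\mathbf Y=\langle\mathcal P,\le\rangle$ has $(s_1,\dots,s_r)\le(n_1,\dots,n_t)$ iff $r\le t$ and $s_i\le n_i$ for all $i\le r$; $\mathbf Y^*$ is $\mathbf Y$ with a constant symbol interpreted as the partition $[1]+[1]=(1,1)$. *)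

From mathcomp Require Import all_boot.
Set Implicit Arguments. Unset Strict Implicit. Unset Printing Implicit Defensive.

Definition is_partition (s : seq nat) : bool :=
  sorted geq s && all (fun x => 0 < x) s.

Record partition := Partition { pval : seq nat; pvalP : is_partition pval }.

Definition young_le (s n : partition) : Prop :=
  size (pval s) <= size (pval n) /\
  forall i, i < size (pval s) -> nth 0 (pval s) i <= nth 0 (pval n) i.

(* [n] : the one-part partition, [0] = empty partition *)
Definition single_seq (n : nat) : seq nat := if n is 0 then [::] else [:: n].
Lemma single_seqP n : is_partition (single_seq n).
Proof. by case: n. Qed.
Definition single (n : nat) : partition := Partition (single_seqP n).

(* the constant [1]+[1] = (1,1) *)
Lemma one_one_P : is_partition [:: 1; 1]. Proof. by []. Qed.
Definition one_one : partition := Partition one_one_P.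

Inductive aterm : Type :=
| AVar : nat -> aterm
| AAdd : aterm -> aterm -> aterm
| AMul : aterm -> aterm -> aterm.

Inductive aform : Type :=
| AEq : aterm -> aterm -> aform
| ANot : aform -> aform
| AAnd : aform -> aform -> aform
| AOr : aform -> aform -> aform
| AEx : nat -> aform -> aform
| AAll : nat -> aform -> aform.

Definition upd {D : Type} (v : nat -> D) (i : nat) (d : D) : nat -> D :=
  fun j => if j == i then d else v j.

Fixpoint aterm_eval (v : nat -> nat) (t : aterm) : nat :=
  match t with
  | AVar i => v i
  | AAdd a b => aterm_eval v a + aterm_eval v b
  | AMul a b => aterm_eval v a * aterm_eval v b
  end.

Fixpoint aform_sat (v : nat -> nat) (f : aform) : Prop :=
  match f with
  | AEq a b => aterm_eval v a = aterm_eval v b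
  | ANot g => ~ aform_sat v g
  | AAnd g h => aform_sat v g /\ aform_sat v h
  | AOr g h => aform_sat v g \/ aform_sat v h
  | AEx i g => exists n : nat, aform_sat (upd v i n) g
  | AAll i g => forall n : nat, aform_sat (upd v i n) g
  end.

Fixpoint aterm_fv (t : aterm) : seq nat :=
  match t with
  | AVar i => [:: i]
  | AAdd a b | AMul a b => aterm_fv a ++ aterm_fv b
  end.

Fixpoint aform_fv (f : aform) : seq nat :=
  match f with
  | AEq a b => aterm_fv a ++ aterm_fv b
  | ANot g => aform_fv g
  | AAnd g h | AOr g h => aform_fv g ++ aform_fv h
  | AEx i g | AAll i g => filter (fun j => j != i) (aform_fv g)
  end.

Inductive yterm : Type :=
| YVar : nat -> yterm
| YConst : yterm.

Inductive yform : Type :=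
| YEq : yterm -> yterm -> yform
| YLe : yterm -> yterm -> yform
| YNot : yform -> yform
| YAnd : yform -> yform -> yform
| YOr : yform -> yform -> yform
| YEx : nat -> yform -> yform
| YAll : nat -> yform -> yform.

Definition yterm_eval (v : nat -> partition) (t : yterm) : partition :=
  match t with
  | YVar i => v i
  | YConst => one_one
  end.

Fixpoint yform_sat (v : nat -> partition) (f : yform) : Prop :=
  match f with
  | YEq a b => yterm_eval v a = yterm_eval v b
  | YLe a b => young_le (yterm_eval v a) (yterm_eval v b)
  | YNot g => ~ yform_sat v g
  | YAnd g h => yform_sat v g /\ yform_sat v h
  | YOr g h => yform_sat v g \/ yform_sat v h
  | YEx i g => exists p : partition, yform_sat (upd v i p) g
  | YAll i g => forall p : partition, yform_sat (upd v i p) g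
  end.

Definition yterm_fv (t : yterm) : seq nat :=
  match t with
  | YVar i => [:: i]
  | YConst => [::]
  end.

Fixpoint yform_fv (f : yform) : seq nat :=
  match f with
  | YEq a b | YLe a b => yterm_fv a ++ yterm_fv b
  | YNot g => yform_fv g
  | YAnd g h | YOr g h => yform_fv g ++ yform_fv h
  | YEx i g | YAll i g => filter (fun j => j != i) (yform_fv g)
  end.

(* The number n is encoded by the one-row partition [n].  One-row partitions
   are definable (they are the partitions not above (1,1)), and on them
   Young's order is the order of N.  The work is to define the graphs of
   addition and multiplication on one-row partitions.  Viewing a partition as
   its sequence of rows, Young's order can measure a partition x: its first
   row (probing with one-row partitions), its number of rows (probing with
   columns), whether an I x M rectangle fits in x (Fits), hence the value of
   its I-th row (RowAt).  A first-order condition then says that consecutive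
   rows of x drop by a fixed amount (StepsDown); this defines staircases, and
   A + B is read off as a row of a staircase (IsSum) while A * B is the first
   row of an arithmetic progression with difference A and B rows (IsProd).
   Terms and formulas are then translated compositionally (tr_term, tr_form),
   quantifiers being relativized to one-row partitions.  Rather than tracking
   the free variables of the auxiliary gadgets, every variable of the
   translation outside x_1, ..., x_k is closed by a universal row quantifier
   (close_rows), which does not change the meaning; this gives lemma4p2. *)

From Pilot Require Import Defs.
From mathcomp Require Import all_boot zify.
From Stdlib Require Import Classical Setoid.
Set Implicit Arguments. Unset Strict Implicit.

(* [partition] alone would denote finset's set partitions. *)
Notation part := Defs.partition.
Notation sat := yform_sat.

(* A partition is viewed as its infinite row sequence (padded by zeros). *)
Definition row (p : part) (j : nat) : nat := nth 0 (pval p) j.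
Definition len (p : part) : nat := size (pval p).

Lemma row_gt0 p j : (0 < row p j) = (j < len p).
Proof.
rewrite /row /len; case: p => s /= /andP [_ /allP s_pos].
case: (ltnP j (size s)) => hj; last by rewrite nth_default.
by apply: s_pos; rewrite mem_nth.
Qed.

Lemma row_antitone p i j : i <= j -> row p j <= row p i.
Proof.
move=> le_ij; case: (ltnP j (len p)) => hj; last by rewrite /row nth_default.
case: p hj => s /= sP hj; have /andP [s_sorted _] := sP; rewrite /row /=.
apply: (sorted_leq_nth (leT := geq)) => //.
- by move=> x y z /= h1 h2; apply: leq_trans h2 h1.
- by move=> x /=.
- exact: (leq_ltn_trans le_ij hj).
Qed.

Lemma young_leP p q : young_le p q <-> forall j, row p j <= row q j.
Proof.
split=> [[_ le_pq] j | le_pq].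
  by case: (ltnP j (len p)) => hj; [exact: le_pq | rewrite /row nth_default].
split=> [|i _]; last exact: le_pq.
rewrite leqNgt; apply/negP => lt_qp.
have := le_pq (len q); have := row_gt0 q (len q); have := row_gt0 p (len q).
rewrite ltnn lt_qp; lia.
Qed.

Lemma len_of_rows p n : (forall j, (0 < row p j) = (j < n)) -> len p = n.
Proof.
move=> rows_p; apply/eqP; rewrite eqn_leq.
apply/andP; split; rewrite leqNgt; apply/negP => hlt.
- by have := rows_p n; rewrite row_gt0 hlt ltnn.
- by have := rows_p (len p); rewrite row_gt0 ltnn hlt.
Qed.

Lemma partition_ext p q : (forall j, row p j = row q j) -> p = q.
Proof.
move=> eq_rows; have eq_len : len p = len q.
  by apply: len_of_rows => j; rewrite eq_rows row_gt0.
case: p q eq_rows eq_len => s Hs [t Ht] eq_rows /= eq_len.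
have eq_st : s = t by apply: (eq_from_nth (x0 := 0)) => // i _; apply: eq_rows.
by subst t; congr Partition; apply: eq_irrelevance.
Qed.

Lemma row_single n j : row (single n) j = if j == 0 then n else 0.
Proof. by rewrite /row; case: n => [|n]; case: j => [|j] //=; rewrite nth_nil. Qed.

Lemma len_single n : len (single n) = (0 < n).
Proof. by case: n. Qed.

Lemma len_single_le1 n : len (single n) <= 1.
Proof. by case: n. Qed.

Lemma single_row p : len p <= 1 -> p = single (row p 0).
Proof.
move=> len_p; apply: partition_ext => -[|j]; rewrite row_single //=.
by apply/eqP; rewrite -leqn0 leqNgt row_gt0; lia.
Qed.

Fixpoint prog_seq (n c a : nat) : seq nat :=
  if n is n'.+1 then (if c is 0 then [::] else c :: prog_seq n' (c - a) a) else [::].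

(* The bound by c is the induction invariant that keeps the sequence sorted. *)
Lemma prog_seq_bounded n c a :
  [&& sorted geq (prog_seq n c a), all (leq^~ c) (prog_seq n c a)
    & all (leq 1) (prog_seq n c a)].
Proof.
elim: n c => [|n IH] [|c] //=; have /and3P [s_sorted s_le s_pos] := IH (c.+1 - a).
rewrite s_pos leqnn /= andbT.
rewrite (path_sortedE (leT := geq)); last by move=> x y z /= h1 h2; apply: leq_trans h2 h1.
by rewrite s_sorted andbT; apply/andP; split; apply/allP => x /(allP s_le); lia.
Qed.

Lemma prog_seq_partition n c a : is_partition (prog_seq n c a).
Proof. by have /and3P [? _ ?] := prog_seq_bounded n c a; apply/andP. Qed.

Definition prog (n c a : nat) : part := Partition (prog_seq_partition n c a).

Lemma row_prog n c a j : row (prog n c a) j = if j < n then c - j * a else 0.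
Proof.
rewrite /row /=; elim: n c j => [|n IH] c j /=; first by rewrite nth_nil.
case: c => [|c]; first by rewrite nth_nil; case: (j < n.+1).
case: j => [|j] //=; rewrite IH ltnS; case: (j < n) => //; lia.
Qed.

Definition rect (n m : nat) : part := prog n m 0.
Definition column (n : nat) : part := rect n 1.
Definition stair (T : nat) : part := prog T T 1.

Lemma row_rect n m j : row (rect n m) j = if j < n then m else 0.
Proof. by rewrite row_prog muln0 subn0. Qed.

Lemma len_rect n m : 0 < m -> len (rect n m) = n.
Proof. by move=> m_gt0; apply: len_of_rows => j; rewrite row_rect; case: (j < n). Qed.

Lemma row_column n j : row (column n) j = (j < n).
Proof. by rewrite row_rect; case: (j < n). Qed.

Lemma len_column n : len (column n) = n.
Proof. exact: len_rect. Qed.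

Lemma row_stair T j : row (stair T) j = T - j.
Proof. by rewrite row_prog muln1; case: ltnP => //; lia. Qed.

Lemma len_stair T : len (stair T) = T.
Proof. by apply: len_of_rows => j; rewrite row_stair; lia. Qed.

Lemma young_le_len p q : young_le p q -> len p <= len q.
Proof. by case. Qed.

Lemma young_le_row p q j : young_le p q -> row p j <= row q j.
Proof. by move/young_leP. Qed.

Lemma one_one_le p : young_le one_one p <-> 1 < len p.
Proof.
have row_11 j : row one_one j = (j < 2) by case: j => [|[|j]] //; rewrite /row /= nth_nil.
rewrite young_leP; split=> [/(_ 1)|len_p j]; first by rewrite row_11 /= -row_gt0.
rewrite row_11; case: ltnP => // hj.
have := row_gt0 p 1; rewrite len_p => row1; have := row_antitone p (_ : j <= 1); lia.
Qed.

Lemma single_le m p : young_le (single m) p <-> m <= row p 0.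
Proof.
rewrite young_leP; split=> [/(_ 0)|]; first by rewrite row_single.
by move=> h [|j]; rewrite row_single.
Qed.

Lemma le_single p m : young_le p (single m) <-> len p <= 1 /\ row p 0 <= m.
Proof.
rewrite young_leP; split=> [le_pm|[len_p row_p] [|j]]; rewrite ?row_single //=.
  have := le_pm 0; have := le_pm 1; rewrite !row_single /= leqn0 => /eqP row1 row0.
  by split=> //; rewrite leqNgt -row_gt0 row1.
by rewrite leqn0 -[_ == _]negbK -lt0n row_gt0; apply/negP; lia.
Qed.

Lemma le_of_row p q : len p <= 1 -> (young_le p q <-> row p 0 <= row q 0).
Proof. by move=> /single_row ->; rewrite single_le row_single. Qed.

Lemma column_of p : row p 0 <= 1 -> p = column (len p).
Proof.
move=> row0; apply: partition_ext => j; rewrite row_column.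
by have := row_gt0 p j; have := row_antitone p (leq0n j); case: (j < len p); lia.
Qed.

Lemma le_of_column p q : row p 0 <= 1 -> (young_le p q <-> len p <= len q).
Proof.
move=> row0; split; first exact: young_le_len.
move=> le_len; apply/young_leP => j; rewrite (column_of row0) row_column.
by have := row_gt0 q j; case: ltnP => hj //; lia.
Qed.

(* Young's order can measure a partition y by probing it with one-row
   partitions, columns and rectangles. *)
Lemma rows_below y s :
  (forall p, len p <= 1 /\ young_le p y -> young_le p s) <-> row y 0 <= row s 0.
Proof.
split=> [below|le_ys p [len_p le_py]].
  by apply/single_le/below; rewrite len_single_le1 single_le.
by rewrite le_of_row //; have := young_le_row 0 le_py; lia.
Qed.

Lemma columns_below y c :
  (forall p, row p 0 <= 1 /\ young_le p y -> young_le p c) <-> len y <= len c.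
Proof.
have col0 : row (column (len y)) 0 <= 1 by rewrite row_column; case: (0 < len y).
split=> [below|le_yc p [row_p le_py]].
  by have := below (column (len y)); rewrite !(le_of_column _ col0) len_column; apply.
by rewrite le_of_column //; have := young_le_len le_py; lia.
Qed.

(* [fits x I M]: the I x M rectangle is contained in x. *)
Definition fits (x : part) (I M : nat) : bool := [|| I == 0, M == 0 | M <= row x I.-1].

Lemma rects_below x I M :
  (forall y, row y 0 <= M -> len y <= I -> young_le y x) <-> fits x I M.
Proof.
rewrite /fits; split=> [below|fit y row_y len_y].
  case: I below => [|I] //; case: M => [|M] //= below.
  have := below (rect I.+1 M.+1); rewrite row_rect len_rect // !leqnn => /(_ isT isT).
  by move/young_leP/(_ I); rewrite row_rect ltnSn.
apply/young_leP => j; have := row_gt0 y j; have := row_antitone y (leq0n j).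
case: (ltnP j (len y)) => hj; last by lia.
case/orP: fit => [/eqP|/orP [/eqP|fit]]; try lia.
by have := row_antitone x (_ : j <= I.-1); lia.
Qed.

(* Evaluates lookups [upd v i d j] whose indices are compared by linear arithmetic. *)
Ltac simpl_upd :=
  rewrite /upd /=; repeat match goal with
  | |- context [?a == ?a] => rewrite eqxx
  | |- context [?a == ?b] =>
      let E := fresh "E" in
      (have E : (a == b) = false by apply/eqP; lia);
      rewrite E; clear E
  end.

Definition Imp (f g : yform) : yform := YOr (YNot f) g.
Definition Iff (f g : yform) : yform := YAnd (Imp f g) (Imp g f).
Notation Le i j := (YLe (YVar i) (YVar j)).

Lemma ImpE v f g : sat v (Imp f g) <-> (sat v f -> sat v g).
Proof. by rewrite /Imp /=; split=> [[]|H] //; case: (classic (sat v f)); tauto. Qed.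
Opaque Imp.

Lemma IffE v f g : sat v (Iff f g) <-> (sat v f <-> sat v g).
Proof. by rewrite /Iff /= !ImpE. Qed.
Opaque Iff.

(* Each gadget below takes the indices of its free variables and an index b:
   its bound variables are b, b+1, ..., so its semantics is stated for free
   indices below b.  Once its semantics is proved, a gadget is made opaque so
   that simplification of [sat] keeps it folded. *)

Definition IsRow (x : nat) : yform := YNot (YLe YConst (YVar x)).

Lemma IsRowE v x : sat v (IsRow x) <-> len (v x) <= 1.
Proof. by rewrite /IsRow /= one_one_le; split=> h; lia. Qed.
Opaque IsRow.

Definition IsEmpty (x b : nat) : yform := YAll b (Le x b).

Lemma IsEmptyE v x b : x < b -> (sat v (IsEmpty x b) <-> len (v x) = 0).
Proof.
move=> hx; rewrite /IsEmpty /=; split=> [/(_ (single 0))|len_x p]; simpl_upd.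
  by move/le_single => [_ row0]; have := row_gt0 (v x) 0; lia.
by apply/young_leP => j; have := row_gt0 (v x) j; rewrite len_x; lia.
Qed.
Opaque IsEmpty.

Definition IsColumn (x b : nat) : yform :=
  YAll b (Imp (YAnd (IsRow b) (Le b x)) (YLe (YVar b) YConst)).

Lemma IsColumnE v x b : x < b -> (sat v (IsColumn x b) <-> row (v x) 0 <= 1).
Proof.
move=> hx; rewrite /IsColumn /=; setoid_rewrite ImpE; rewrite /=.
setoid_rewrite IsRowE; simpl_upd; rewrite -(rows_below (v x) one_one).
by rewrite /one_one /row.
Qed.
Opaque IsColumn.

(* The len(c) x row(s)_0 rectangle fits in x: every partition b whose one-row
   lower bounds lie below s and whose column lower bounds lie below c is below
   x (see rects_below). *)
Definition Fits (x c s b : nat) : yform :=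
  YAll b (Imp (YAnd (YAll b.+1 (Imp (YAnd (IsRow b.+1) (Le b.+1 b)) (Le b.+1 s)))
                    (YAll b.+1 (Imp (YAnd (IsColumn b.+1 b.+2) (Le b.+1 b)) (Le b.+1 c))))
              (Le b x)).

Lemma FitsE v x c s b : x < b -> c < b -> s < b ->
  (sat v (Fits x c s b) <-> fits (v x) (len (v c)) (row (v s) 0)).
Proof.
move=> hx hc hs; rewrite /Fits /= -rects_below; setoid_rewrite ImpE; rewrite /=.
setoid_rewrite ImpE; rewrite /=; setoid_rewrite IsRowE.
have col_b w : sat w (IsColumn b.+1 b.+2) <-> row (w b.+1) 0 <= 1 by exact: IsColumnE.
setoid_rewrite col_b; simpl_upd; setoid_rewrite rows_below; setoid_rewrite columns_below.
by split=> H y; [move=> h1 h2; exact: H | move=> [h1 h2]; exact: H].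
Qed.
Opaque Fits.

Definition Covers (x y b : nat) : yform :=
  YAnd (Le x y) (YAnd (YNot (Le y x)) (YAll b (Imp (Le b y) (YOr (Le b x) (Le y b))))).

Lemma Covers_rowE v x y b : x < b -> y < b -> len (v y) <= 1 ->
  (sat v (Covers x y b) <-> len (v x) <= 1 /\ row (v y) 0 = (row (v x) 0).+1).
Proof.
move=> hx hy len_y; rewrite /Covers /=; setoid_rewrite ImpE; rewrite /=; simpl_upd.
split=> [[le_xy [not_le_yx between]]|[len_x row_y]].
  have len_x : len (v x) <= 1 by have := young_le_len le_xy; lia.
  split=> //; move: le_xy not_le_yx; rewrite !le_of_row // => le_xy not_le_yx.
  have := between (single (row (v x) 0).+1).
  by rewrite single_le !le_of_row ?len_single ?row_single //=; lia.
rewrite !le_of_row //; split; first lia; split; first lia.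
move=> p le_py; have len_p : len p <= 1 by have := young_le_len le_py; lia.
by move: le_py; rewrite !le_of_row //; lia.
Qed.

Lemma Covers_columnE v x y b : x < b -> y < b -> row (v y) 0 <= 1 ->
  (sat v (Covers x y b) <-> row (v x) 0 <= 1 /\ len (v y) = (len (v x)).+1).
Proof.
move=> hx hy row_y; rewrite /Covers /=; setoid_rewrite ImpE; rewrite /=; simpl_upd.
split=> [[le_xy [not_le_yx between]]|[row_x len_y]].
  have row_x : row (v x) 0 <= 1 by have := young_le_row 0 le_xy; lia.
  split=> //; move: le_xy not_le_yx; rewrite !le_of_column // => le_xy not_le_yx.
  have col : row (column (len (v x)).+1) 0 <= 1 by rewrite row_column.
  by have := between (column (len (v x)).+1); rewrite !le_of_column ?len_column //; lia.
rewrite !le_of_column //; split; first lia; split; first lia.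
move=> p le_py; have row_p : row p 0 <= 1 by have := young_le_row 0 le_py; lia.
by move: le_py; rewrite !le_of_column //; lia.
Qed.
Opaque Covers.

Definition SameHead (x t b : nat) : yform := YAll b (Imp (IsRow b) (Iff (Le b x) (Le b t))).

Lemma SameHeadE v x t b : x < b -> t < b ->
  (sat v (SameHead x t b) <-> row (v x) 0 = row (v t) 0).
Proof.
move=> hx ht; rewrite /SameHead /=; setoid_rewrite ImpE; setoid_rewrite IffE.
setoid_rewrite IsRowE; rewrite /=; simpl_upd; split=> [H|eq_xt p len_p].
  have := H (single (row (v x) 0)); have := H (single (row (v t) 0)).
  by rewrite !single_le !len_single_le1; lia.
by rewrite !le_of_row // eq_xt.
Qed.
Opaque SameHead.

(* Row number len(c) of x (counting from 1) is the first row of s: the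
   len(c) x row(s)_0 rectangle fits in x, and no longer one-row b does. *)
Definition RowAt (x c s b : nat) : yform :=
  YAnd (Fits x c s b) (YAll b (Imp (YAnd (IsRow b) (Fits x c b b.+1)) (Le b s))).

Lemma RowAtE v x c s b : x < b -> c < b -> s < b ->
  (sat v (RowAt x c s b) <-> 0 < len (v c) /\ row (v x) (len (v c)).-1 = row (v s) 0).
Proof.
move=> hx hc hs; rewrite /RowAt /= FitsE //; setoid_rewrite ImpE; rewrite /=.
setoid_rewrite IsRowE.
have fits_b p : sat (upd v b p) (Fits x c b b.+1) <-> fits (v x) (len (v c)) (row p 0).
  by rewrite FitsE; try lia; simpl_upd.
setoid_rewrite fits_b; simpl_upd; rewrite /fits.
split=> [[fit_s least]|[len_c row_x]]; last first.
  split; first by rewrite row_x leqnn !orbT.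
  move=> p [len_p]; rewrite le_of_row // (_ : (len (v c) == 0) = false); last by apply/eqP; lia.
  by rewrite row_x /=; case: eqP => [->|].
case: (posnP (len (v c))) => len_c.
  have := least (single (row (v s) 0).+1); rewrite len_c eqxx /= le_of_row ?len_single_le1 //.
  by rewrite !row_single /=; move=> /(_ (conj isT isT)); lia.
have := least (single (row (v x) (len (v c)).-1)); rewrite row_single /= leqnn !orbT.
rewrite le_of_row ?len_single_le1 // row_single /= => /(_ (conj isT isT)).
move: fit_s; rewrite (_ : (len (v c) == 0) = false); last by apply/eqP; lia.
by move=> /= fit_s le_s; split=> //; move: fit_s; case: eqP => [|_ /=]; lia.
Qed.
Opaque RowAt.

Lemma threshold_sub a a' A :
  (forall m, 0 < m -> (m + A <= a <-> m <= a')) <-> a' = a - A.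
Proof.
split=> [H|-> m m_gt0]; last by lia.
by have := H a'; have := H (a - A); lia.
Qed.

(* Consecutive rows of x differ by A, where R s t b expresses t = s + A on
   one-row partitions: for every column c with j+1 rows, the column c' with
   j+2 rows, and one-row partitions [m] (m > 0) and [m + A], the rectangle
   (j+1) x (m+A) fits in x iff the rectangle (j+2) x m does. *)
Definition StepsDown (R : nat -> nat -> nat -> yform) (x b : nat) : yform :=
  YAll b (YAll b.+1 (YAll b.+2 (YAll b.+3 (Imp
    (YAnd (IsColumn b b.+4) (YAnd (YNot (IsEmpty b b.+4)) (YAnd (IsColumn b.+1 b.+4)
      (YAnd (Covers b b.+1 b.+4) (YAnd (IsRow b.+2) (YAnd (YNot (IsEmpty b.+2 b.+4))
        (R b.+2 b.+3 b.+4)))))))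
    (Iff (Fits x b b.+3 b.+4) (Fits x b.+1 b.+2 b.+4)))))).

(* The hypothesis on R: in every valuation agreeing with v below b,
   R (b+2) (b+3) (b+4) defines b+3 = [m + A] from b+2 = [m]. *)
Lemma StepsDownE (R : nat -> nat -> nat -> yform) v x b A : x < b ->
  (forall w m, (forall j, j < b -> w j = v j) -> w b.+2 = single m ->
     (sat w (R b.+2 b.+3 b.+4) <-> w b.+3 = single (m + A))) ->
  (sat v (StepsDown R x b) <-> forall j, row (v x) j.+1 = row (v x) j - A).
Proof.
move=> hx R_add; rewrite /StepsDown /=; split=> [H j|H c c' s t].
  apply/threshold_sub => m m_gt0.
  set w := upd (upd (upd (upd v b (column j.+1)) b.+1 (column j.+2)) b.+2 (single m))
             b.+3 (single (m + A)).
  have := H (column j.+1) (column j.+2) (single m) (single (m + A)).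
  rewrite -/w ImpE IffE !FitsE; try lia.
  rewrite /= !IsColumnE ?IsEmptyE ?IsRowE; try lia.
  rewrite Covers_columnE; try lia; last by rewrite /w; simpl_upd; rewrite row_column.
  rewrite R_add; first last.
  - by rewrite /w; simpl_upd.
  - by move=> i hi; rewrite /w; simpl_upd.
  rewrite /w; simpl_upd; rewrite !len_column !row_column !row_single /= len_single /fits /=.
  have -> : (m + A == 0) = false by apply/eqP; lia.
  have -> : (m == 0) = false by apply/eqP; lia.
  by rewrite m_gt0; apply; do !split.
rewrite ImpE IffE !FitsE; try lia.
rewrite /= !IsColumnE ?IsEmptyE ?IsRowE; try lia.
simpl_upd => -[col_c [c_nonempty [col_c' [covers [row_s [s_nonempty R_st]]]]]].
move: covers; rewrite Covers_columnE; try lia; last by simpl_upd.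
simpl_upd => -[_ len_c'].
move: R_st; rewrite R_add; first last.
- by simpl_upd; exact: single_row.
- by move=> i hi; simpl_upd.
simpl_upd => ->; rewrite /fits len_c' row_single /=.
have s_pos : 0 < row s 0 by rewrite row_gt0; lia.
have -> : (len c == 0) = false by apply/eqP; lia.
have -> : (row s 0 == 0) = false by apply/eqP; lia.
have -> : (row s 0 + A == 0) = false by apply/eqP; lia.
by have := H (len c).-1; rewrite (_ : (len c).-1.+1 = len c) /=; lia.
Qed.
Opaque StepsDown.

Definition IsSucc (s t b : nat) : yform := YAnd (IsRow t) (Covers s t b).

Lemma IsSuccE v s t b : s < b -> t < b ->
  (sat v (IsSucc s t b) <-> len (v s) <= 1 /\ v t = single (row (v s) 0).+1).
Proof.
move=> hs ht; rewrite /IsSucc /= IsRowE.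
split=> [[len_t]|[len_s vt]].
  by rewrite Covers_rowE // => -[len_s row_t]; rewrite (single_row len_t) row_t.
by rewrite vt len_single_le1 Covers_rowE ?vt ?len_single_le1 // row_single.
Qed.
Opaque IsSucc.

Definition IsStair (x t b : nat) : yform := YAnd (StepsDown IsSucc x b) (SameHead x t b).

Lemma IsStairE v x t b : x < b -> t < b ->
  (sat v (IsStair x t b) <-> v x = stair (row (v t) 0)).
Proof.
move=> hx ht; rewrite /IsStair /= (@StepsDownE _ _ _ _ 1) // ?SameHeadE //; last first.
  move=> w m _ w_m; rewrite IsSuccE // w_m len_single_le1 row_single /= addn1.
  by split=> [[]|->].
split=> [[steps head]|->]; last by split=> [j|]; rewrite !row_stair; lia.
apply: partition_ext => j; rewrite row_stair -head.
by elim: j => [|j IH]; [lia | rewrite steps IH; lia].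
Qed.
Opaque IsStair.

Definition defines_op (G : nat -> nat -> nat -> nat -> yform) (op : nat -> nat -> nat) :=
  forall v a y c b A B, a < b -> y < b -> c < b -> v a = single A -> v y = single B ->
    (sat v (G a y c b) <-> v c = single (op A B)).

(* Addition: C = A + B iff the staircase of height C+1 has A+1 as its (B+1)-st
   row, the row index being measured by the staircase of height B+1. *)
Definition IsSum (a y c b : nat) : yform :=
  YEx b (YEx b.+1 (YEx b.+2 (YEx b.+3 (YEx b.+4
   (YAnd (IsSucc a b (b + 5)) (YAnd (IsSucc y b.+1 (b + 5)) (YAnd (IsSucc c b.+2 (b + 5))
    (YAnd (IsStair b.+3 b.+2 (b + 5)) (YAnd (IsStair b.+4 b.+1 (b + 5))
      (RowAt b.+3 b.+4 b (b + 5))))))))))).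

Lemma IsSum_add : defines_op IsSum addn.
Proof.
move=> v a y c b A B ha hy hc va vy; rewrite /IsSum /=; split.
  move=> [p0 [p1 [p2 [p3 [p4]]]]].
  rewrite !IsSuccE ?IsStairE ?RowAtE; try lia.
  simpl_upd; rewrite va vy !row_single /=.
  move=> [[_ e0] [[_ e1] [[len_c e2] [e3 [e4 [_ e5]]]]]].
  rewrite e4 e3 e2 e1 e0 len_stair row_stair !row_single /= in e5.
  by rewrite (single_row len_c); congr single; lia.
move=> vc; exists (single A.+1), (single B.+1), (single (A + B).+1),
  (stair (A + B).+1), (stair B.+1).
rewrite !IsSuccE ?IsStairE ?RowAtE; try lia.
simpl_upd; rewrite va vy vc len_stair row_stair !row_single /= !len_single_le1.
by do !split => //; lia.
Qed.
Opaque IsSum.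

(* Multiplication: for A, B > 0, C = A * B iff some partition with first row C
   has rows decreasing by A (each step defined by IsSum) and B-th row equal to
   A, the row index being measured by the staircase of height B; the case
   A = 0 or B = 0 is treated separately. *)
Definition IsProd (a y c b : nat) : yform :=
  YOr (YAnd (YOr (IsEmpty a b) (IsEmpty y b)) (IsEmpty c b))
      (YAnd (YNot (IsEmpty a b)) (YAnd (YNot (IsEmpty y b)) (YAnd (IsRow c)
        (YEx b (YEx b.+1 (YAnd (StepsDown (fun s t b' => IsSum s a t b') b b.+2)
           (YAnd (SameHead b c b.+2) (YAnd (IsStair b.+1 y b.+2) (RowAt b b.+1 a b.+2))))))))).

Lemma IsProd_mul : defines_op IsProd muln.
Proof.
move=> v a y c b A B ha hy hc va vy; rewrite /IsProd /= !IsEmptyE // IsRowE va vy.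
have len0 n : len (single n) = 0 <-> n = 0 by case: n.
rewrite !len0.
have steps P D : sat (upd (upd v b P) b.+1 D) (StepsDown (fun s t b' => IsSum s a t b') b b.+2)
    <-> forall j, row P j.+1 = row P j - A.
  rewrite (@StepsDownE _ _ _ _ A); try lia; first by simpl_upd.
  move=> w m agree w_m; have w_a : w a = single A by rewrite agree; [simpl_upd | lia].
  by apply: IsSum_add => //; lia.
split=> [[[AB0 c0]|[A_pos [B_pos [len_c [P [D []]]]]]]|vc].
- rewrite (single_row (_ : len (v c) <= 1)); last by lia.
  by congr single; have := row_gt0 (v c) 0; rewrite c0 /=; case: AB0 => ->; rewrite ?muln0; lia.
- rewrite steps SameHeadE ?IsStairE ?RowAtE; try lia.
  simpl_upd; rewrite va => step [head [D_stair [_ row_B]]].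
  rewrite D_stair vy row_single /= len_stair row_single /= in row_B.
  have rows_P j : row P j = row P 0 - j * A.
    by elim: j => [|j IH]; [rewrite subn0 | rewrite step IH mulSn; lia].
  rewrite rows_P head in row_B; rewrite (single_row len_c); congr single.
  by move: row_B B_pos; case: B {vy} => // B /=; rewrite mulnS; nia.
case: (posnP A) => [A0|A_pos]; first by left; split; [left | rewrite vc A0].
case: (posnP B) => [B0|B_pos]; first by left; split; [right | rewrite vc B0 muln0].
right; do 2!(split; first lia); split; first by rewrite vc len_single_le1.
exists (prog (A * B) (A * B) A), (stair B).
rewrite steps SameHeadE ?IsStairE ?RowAtE; try lia.
simpl_upd; rewrite vc vy va !row_single /= len_stair.
split=> [j|]; first by rewrite !row_prog; case: ltnP => h1; case: ltnP => h2; nia.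
split; first by rewrite row_prog; case: ltnP => //; nia.
by do !split => //; rewrite row_prog; case: ltnP => h; nia.
Qed.
Opaque IsProd.

Lemma sat_ext f v w : (forall i, v i = w i) -> (sat v f <-> sat w f).
Proof.
have eval_ext (v' w' : nat -> part) t : (forall i, v' i = w' i) ->
    yterm_eval v' t = yterm_eval w' t.
  by case: t => [i|] H //=.
have upd_ext (v' w' : nat -> part) i p : (forall j, v' j = w' j) ->
    forall j, upd v' i p j = upd w' i p j.
  by move=> H j; rewrite /upd; case: (j == i).
elim: f v w => [a c|a c|g IH|g IHg h IHh|g IHg h IHh|i g IH|i g IH] v w H /=.
- by rewrite !(eval_ext v w).
- by rewrite !(eval_ext v w).
- by rewrite (IH v w).
- by rewrite (IHg v w) // (IHh v w).
- by rewrite (IHg v w) // (IHh v w).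
- by split=> -[p]; exists p; move: p0; rewrite (IH (upd v i p) (upd w i p) (upd_ext _ _ i p H)).
- by split=> hp p; move: (hp p); rewrite (IH (upd v i p) (upd w i p) (upd_ext _ _ i p H)).
Qed.

Lemma aterm_ext t n n' : (forall i, i \in aterm_fv t -> n i = n' i) ->
  aterm_eval n t = aterm_eval n' t.
Proof.
elim: t => [i|a IHa b IHb|a IHa b IHb] H /=; first by apply: H; rewrite inE.
- by rewrite IHa ?IHb // => i hi; apply: H; rewrite mem_cat hi ?orbT.
- by rewrite IHa ?IHb // => i hi; apply: H; rewrite mem_cat hi ?orbT.
Qed.

Lemma aform_ext f n n' : (forall i, i \in aform_fv f -> n i = n' i) ->
  (aform_sat n f <-> aform_sat n' f).
Proof.
have upd_ext (n1 n2 : nat -> nat) i g m :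
    (forall j, j \in [seq x <- g | x != i] -> n1 j = n2 j) ->
    forall j, j \in g -> upd n1 i m j = upd n2 i m j.
  move=> H j hj; rewrite /upd; case: eqP => // /eqP ne_ji.
  by apply: H; rewrite mem_filter ne_ji.
elim: f n n' => [a b|g IH|g IHg h IHh|g IHg h IHh|i g IH|i g IH] n n' H /=.
- by rewrite (aterm_ext (n' := n') (t := a)) ?(aterm_ext (n' := n') (t := b)) // => j hj;
    apply: H; rewrite mem_cat hj ?orbT.
- by rewrite (IH n n').
- by rewrite (IHg n n') ?(IHh n n') // => j hj; apply: H; rewrite mem_cat hj ?orbT.
- by rewrite (IHg n n') ?(IHh n n') // => j hj; apply: H; rewrite mem_cat hj ?orbT.
- by split=> -[m hm]; exists m; move: hm; rewrite (IH (upd n i m) (upd n' i m)) //; apply: upd_ext.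
- by split=> hm m; move: (hm m); rewrite (IH (upd n i m) (upd n' i m)) //; apply: upd_ext.
Qed.

Definition encode (n : nat -> nat) : nat -> part := fun i => single (n i).

Lemma upd_encode n i m j : upd (encode n) i (single m) j = encode (upd n i m) j.
Proof. by rewrite /upd /encode; case: (j == i). Qed.

Definition ExRow (i : nat) (f : yform) : yform := YEx i (YAnd (IsRow i) f).
Definition AllRow (i : nat) (f : yform) : yform := YAll i (Imp (IsRow i) f).

(* AllRow is opaque to simplification, but still unfolds by conversion. *)
Lemma AllRow_fv i f : yform_fv (AllRow i f) = [seq j <- yform_fv f | j != i].
Proof.
have -> : yform_fv (AllRow i f) = [seq j <- i :: yform_fv f | j != i] by [].
by rewrite /= eqxx.
Qed.

Lemma ExRowE n i f :
  sat (encode n) (ExRow i f) <-> exists m, sat (encode (upd n i m)) f.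
Proof.
rewrite /ExRow /=; split=> [[p []]|[m]].
  rewrite IsRowE /upd eqxx => /single_row len_p.
  rewrite -/(upd _ i p) len_p (sat_ext _ (upd_encode n i _)).
  by exists (row p 0).
rewrite -(sat_ext _ (upd_encode n i m)) => Hm.
by exists (single m); rewrite IsRowE /upd eqxx len_single_le1.
Qed.

Lemma AllRowE n i f :
  sat (encode n) (AllRow i f) <-> forall m, sat (encode (upd n i m)) f.
Proof.
rewrite /AllRow /=; split=> [H m|H p].
  by have := H (single m); rewrite ImpE IsRowE /upd eqxx len_single_le1 -/(upd _ i _)
    (sat_ext _ (upd_encode n i m)); apply.
rewrite ImpE IsRowE /upd eqxx => /single_row len_p.
by rewrite -/(upd _ i p) len_p (sat_ext _ (upd_encode n i _)).
Qed.
Opaque ExRow AllRow.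

(* [T r c] expresses that variable r holds the encoding of N, for valuations
   encoding n on the variables fv, all below the first bound index c > r. *)
Definition expresses (T : nat -> nat -> yform) (fv : seq nat) (n : nat -> nat) (N : nat) :=
  forall r c v, r < c -> (forall j, j \in fv -> j < c /\ v j = single (n j)) ->
    (sat v (T r c) <-> v r = single N).

Definition tr_binop (G : nat -> nat -> nat -> nat -> yform) (Ta Tb : nat -> nat -> yform)
    (r c : nat) : yform :=
  YEx c (YAnd (Ta c c.+2) (YEx c.+1 (YAnd (Tb c.+1 c.+2) (G c c.+1 r c.+2)))).

Lemma tr_binopE G op Ta Tb fa fb n A B :
  defines_op G op -> expresses Ta fa n A -> expresses Tb fb n B ->
  expresses (tr_binop G Ta Tb) (fa ++ fb) n (op A B).
Proof.
move=> G_op Ta_A Tb_B r c v r_c fv_v; rewrite /tr_binop /=.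
have Ta_p p : sat (upd v c p) (Ta c c.+2) <-> p = single A.
  rewrite Ta_A; [by simpl_upd | by [] |] => j hj.
  have /fv_v [j_c vj] : j \in fa ++ fb by rewrite mem_cat hj.
  by split; [lia | simpl_upd].
have Tb_q p q : sat (upd (upd v c p) c.+1 q) (Tb c.+1 c.+2) <-> q = single B.
  rewrite Tb_B; [by simpl_upd | by [] |] => j hj.
  have /fv_v [j_c vj] : j \in fa ++ fb by rewrite mem_cat hj orbT.
  by split; [lia | simpl_upd].
have G_AB : sat (upd (upd v c (single A)) c.+1 (single B)) (G c c.+1 r c.+2)
    <-> v r = single (op A B).
  by rewrite (G_op _ c c.+1 r c.+2 A B) //; try lia; simpl_upd.
split=> [[p [/Ta_p -> [q [/Tb_q ->]]]]|vr]; first by rewrite G_AB.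
by exists (single A); rewrite Ta_p; split=> //; exists (single B); rewrite Tb_q G_AB.
Qed.

(* [tr_term t r c]: r holds the value of t, intermediate values being stored
   in the bound variables c, c+1, ... *)
Fixpoint tr_term (t : aterm) (r c : nat) : yform :=
  match t with
  | AVar i => YEq (YVar r) (YVar i)
  | AAdd a b => tr_binop IsSum (tr_term a) (tr_term b) r c
  | AMul a b => tr_binop IsProd (tr_term a) (tr_term b) r c
  end.

Lemma tr_termE t n : expresses (tr_term t) (aterm_fv t) n (aterm_eval n t).
Proof.
elim: t => [i|a IHa b IHb|a IHa b IHb] /=.
- by move=> r c v _ fv_v /=; have [_ ->] := fv_v i (mem_head _ _).
- exact: tr_binopE IsSum_add IHa IHb.
- exact: tr_binopE IsProd_mul IHa IHb.
Qed.

Definition fresh (s : seq nat) : nat := (\max_(i <- s) i).+1.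

Lemma fresh_gt s j : j \in s -> j < fresh s.
Proof. by move=> j_s; rewrite ltnS; apply: leq_bigmax_seq. Qed.

(* Quantifiers range over one-row partitions; an equation a = b is translated
   by computing a and b into the same fresh variable. *)
Fixpoint tr_form (f : aform) : yform :=
  match f with
  | AEq a b => let N := fresh (aterm_fv a ++ aterm_fv b) in
               YEx N (YAnd (tr_term a N N.+1) (tr_term b N N.+1))
  | ANot g => YNot (tr_form g)
  | AAnd g h => YAnd (tr_form g) (tr_form h)
  | AOr g h => YOr (tr_form g) (tr_form h)
  | AEx i g => ExRow i (tr_form g)
  | AAll i g => AllRow i (tr_form g)
  end.

Lemma tr_formE f n : aform_sat n f <-> sat (encode n) (tr_form f).
Proof.
elim: f n => [a b|g IH|g IHg h IHh|g IHg h IHh|i g IH|i g IH] n /=.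
- set N := fresh _.
  have term_N t p : (forall j, j \in aterm_fv t -> j < N) ->
      (sat (upd (encode n) N p) (tr_term t N N.+1) <-> p = single (aterm_eval n t)).
    move=> fv_t; rewrite (@tr_termE t n) //; first by rewrite /upd eqxx.
    by move=> j /fv_t j_N; split; [lia | simpl_upd].
  have fv_a j : j \in aterm_fv a -> j < N by move=> hj; apply: fresh_gt; rewrite mem_cat hj.
  have fv_b j : j \in aterm_fv b -> j < N.
    by move=> hj; apply: fresh_gt; rewrite mem_cat hj orbT.
  split=> [eq_ab|[p []]]; first by exists (single (aterm_eval n a)); rewrite !term_N // eq_ab.
  by rewrite !term_N // => -> /(congr1 (row^~ 0)); rewrite !row_single.
- by rewrite IH.
- by rewrite IHg IHh.
- by rewrite IHg IHh.
- by rewrite ExRowE; setoid_rewrite IH.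
- by rewrite AllRowE; setoid_rewrite IH.
Qed.

Fixpoint close_rows (js : seq nat) (f : yform) : yform :=
  if js is j :: js' then AllRow j (close_rows js' f) else f.

Lemma close_rows_fv js f i :
  i \in yform_fv (close_rows js f) -> (i \in yform_fv f) && (i \notin js).
Proof.
elim: js => [|j js IH] /=; first by move=> ->.
rewrite AllRow_fv mem_filter => /andP [ne_ij /IH /andP [-> i_js]].
by rewrite inE (negbTE ne_ij).
Qed.

Lemma close_rowsE js f n : sat (encode n) (close_rows js f) <->
  forall n', (forall i, i \notin js -> n' i = n i) -> sat (encode n') f.
Proof.
elim: js n => [|j js IH] n /=.
  split=> [H n' agree|]; last by apply.
  by rewrite (sat_ext _ (w := encode n)) // => i; rewrite /encode agree.
rewrite AllRowE; setoid_rewrite IH; split=> [H n' agree|H m n' agree].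
  apply: (H (n' j)) => i i_js; rewrite /upd; case: eqP => [->|/eqP ne_ij] //.
  by apply: agree; rewrite inE negb_or ne_ij.
apply: H => i; rewrite inE negb_or => /andP [ne_ij i_js].
by rewrite agree // /upd (negbTE ne_ij).
Qed.

Theorem lemma4p2 :
  forall (k : nat) (phi : aform),
    all (fun i => i < k) (aform_fv phi) ->
    exists psi : yform,
      all (fun i => i < k) (yform_fv psi) /\
      forall n : nat -> nat,
        aform_sat n phi <-> yform_sat (fun i => single (n i)) psi.
Proof.
move=> k phi /allP fv_phi.
set js := [seq i <- yform_fv (tr_form phi) | ~~ (i < k)].
exists (close_rows js (tr_form phi)); split.
  apply/allP => i /close_rows_fv /andP [i_fv i_js].
  by move: i_js; rewrite mem_filter i_fv andbT negbK.
move=> n; rewrite -/(encode n) close_rowsE; split=> [H n' agree|H].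
  rewrite -tr_formE; apply/(aform_ext (n := n)) => // i i_phi.
  by symmetry; apply: agree; rewrite mem_filter negb_and negbK fv_phi.
by rewrite tr_formE; apply: H.
Qed.
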